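(* Consider a discounted Markov decision problem and the policy mirror descent method as described in the context, with $\pi^{(0)}\in\operatorname{rint}\Pi$ and constant step size $\eta_k=\eta>0$ for all $k\ge0$. Then for any $\rho\in\Delta(\mathcal{S})$ and all $k\ge0$, \[ V_\rho(\pi^{(k)})-V_\rho^\star\le\frac1{k+1}\left(\frac{D^\star_0}{\eta(1-\gamma)}+\frac1{(1-\gamma)^2}\right). \]
   Context: A discounted Markov decision problem (cost-minimization form): finite state set $\mathcal{S}$, finite action set $\mathcal{A}$, transition probabilities $P(s'|s,a)$, cost $R:\mathcal{S}\times\mathcal{A}\to[0,1]$, discount $\gamma\in[0,1)$. Policies $\Pi=\Delta(\mathcal{A})^{|\mathcal{S}|}$, $\pi=(\pi_s)_s$ with $\pi_s\in\Delta(\mathcal{A})$; $\operatorname{rint}\Pi$ is the set of policies with all entries $\pi_{s,a}>0$. $V_s(\pi)=\mathbf{E}\bigl[\sum_{t\ge0}\gamma^tR(s_t,a_t)\mid s_0=s\bigr]$ with $a_t\sim\pi_{s_t}$, $s_{t+1}\sim P(\cdot|s_t,a_t)$; $V_\rho(\pi)=\sum_s\rho_sV_s(\pi)$; $V^\star_\rho=\min_{\pi\in\Pi}V_\rho(\pi)$; $\pi^\star$ denotes a policy minimizing $V_s$ simultaneously for all $s$. $Q_{s,a}(\pi)=R_{s,a}+\gamma\sum_{s'}P(s'|s,a)V_{s'}(\pi)$, $Q_s(\pi)\in\mathbf{R}^{|\mathcal{A}|}$. Discounted state visitation: $d_{s,s'}(\pi)=(1-\gamma)\sum_{t\ge0}\gamma^t\Pr^\pi(s_t=s'\mid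 s_0=s)$, $d_{\rho,s'}(\pi)=\sum_s\rho_sd_{s,s'}(\pi)$. Bregman divergence: $h:\mathbf{R}^{|\mathcal{A}|}\to\mathbf{R}\cup\{+\infty\}$ is a convex function of Legendre type (proper, closed, essentially smooth, strictly convex on the relative interior of its domain) with $\Delta(\mathcal{A})\subseteq\operatorname{dom}h$ and $\operatorname{rint}\Delta(\mathcal{A})\subseteq\operatorname{rint}\operatorname{dom}h$ (e.g. $h=\frac12\|\cdot\|_2^2$, or negative entropy $h(p)=\sum_ap_a\log p_a$); $D(p,p')=h(p)-h(p')-\langle\nabla h(p'),p-p'\rangle$ for $p\in\operatorname{dom}h$, $p'\in\operatorname{rint}\operatorname{dom}h$. Policy mirror descent: given $\pi^{(0)}$ and step sizes $\eta_k>0$, for each $s\in\mathcal{S}$, $\pi^{(k+1)}_s=\arg\min_{p\in\Delta(\mathcal{A})}\{\eta_k\langle Q_s(\pi^{(k)}),p\rangle+D(p,\pi^{(k)}_s)\}$ (the iterates are well defined and remain in $\operatorname{rint}\operatorname{dom}h$). Notation: $D^\star_k=\sum_{s\in\mathcal{S}}d_{\rho,s}(\pi^\star)D(\pi^\star_s,\pi^{(k)}_s)$. *)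

From HB Require Import structures.
From mathcomp Require Import all_boot all_order all_algebra.
From mathcomp Require Import all_classical all_reals all_analysis.
Set Implicit Arguments. Unset Strict Implicit. Unset Printing Implicit Defensive.
Import Order.TTheory GRing.Theory Num.Theory.
Import numFieldNormedType.Exports.
Local Open Scope classical_set_scope.
Local Open Scope ring_scope.

(* Conventions:
   - the finite state set is an arbitrary finType S;
   - the finite action set is 'I_m (m actions), so that a distribution over
     actions is a row vector p : 'rV[R]_m (entry p ord0 a), living in the
     normed space R^|A| on which the Bregman generator h is defined;
   - a policy is pi : S -> 'rV[R]_m. *)

Definition in_simplex {R : realType} {m : nat} (p : 'rV[R]_m) : Prop :=
  (forall a : 'I_m, 0 <= p ord0 a) /\ \sum_(a < m) p ord0 a = 1.

Definition in_rint_simplex {R : realType} {m : nat} (p : 'rV[R]_m) : Prop :=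
  in_simplex p /\ (forall a : 'I_m, 0 < p ord0 a).

Definition is_policy {R : realType} {S : finType} {m : nat}
  (pi : S -> 'rV[R]_m) : Prop := forall s, in_simplex (pi s).

Definition is_rint_policy {R : realType} {S : finType} {m : nat}
  (pi : S -> 'rV[R]_m) : Prop := forall s, in_rint_simplex (pi s).

Definition is_state_distr {R : realType} {S : finType} (rho : S -> R) : Prop :=
  (forall s, 0 <= rho s) /\ \sum_s rho s = 1.

Definition is_MDP {R : realType} {S : finType} {m : nat}
  (P : S -> 'I_m -> S -> R) (c : S -> 'I_m -> R) (gamma : R) : Prop :=
  [/\ (forall s a s', 0 <= P s a s'),
      (forall s a, \sum_s' P s a s' = 1),
      (forall s a, 0 <= c s a <= 1) &
      0 <= gamma < 1].

Fixpoint state_prob {R : realType} {S : finType} {m : nat}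
  (P : S -> 'I_m -> S -> R) (pi : S -> 'rV[R]_m) (s : S) (t : nat) : S -> R :=
  match t with
  | 0 => fun s' => (s' == s)%:R
  | t.+1 => fun s' =>
      \sum_(x : S) state_prob P pi s t x * \sum_(a < m) pi x ord0 a * P x a s'
  end.

Definition exp_cost {R : realType} {S : finType} {m : nat}
  (P : S -> 'I_m -> S -> R) (c : S -> 'I_m -> R) (pi : S -> 'rV[R]_m)
  (s : S) (t : nat) : R :=
  \sum_(x : S) state_prob P pi s t x * \sum_(a < m) pi x ord0 a * c x a.

Definition Vs {R : realType} {S : finType} {m : nat}
  (P : S -> 'I_m -> S -> R) (c : S -> 'I_m -> R) (gamma : R)
  (pi : S -> 'rV[R]_m) (s : S) : R :=
  limn (fun n => \sum_(0 <= t < n) gamma ^+ t * exp_cost P c pi s t).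

Definition Vrho {R : realType} {S : finType} {m : nat}
  (P : S -> 'I_m -> S -> R) (c : S -> 'I_m -> R) (gamma : R)
  (rho : S -> R) (pi : S -> 'rV[R]_m) : R :=
  \sum_s rho s * Vs P c gamma pi s.

(* V^*_rho = min over policies of V_rho (written as the infimum) *)
Definition Vstar {R : realType} {S : finType} {m : nat}
  (P : S -> 'I_m -> S -> R) (c : S -> 'I_m -> R) (gamma : R)
  (rho : S -> R) : R :=
  inf [set Vrho P c gamma rho pi | pi in [set pi | is_policy pi]].

Definition is_optimal_policy {R : realType} {S : finType} {m : nat}
  (P : S -> 'I_m -> S -> R) (c : S -> 'I_m -> R) (gamma : R)
  (pistar : S -> 'rV[R]_m) : Prop :=
  is_policy pistar /\
  forall pi, is_policy pi -> forall s, Vs P c gamma pistar s <= Vs P c gamma pi s.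

Definition Qsa {R : realType} {S : finType} {m : nat}
  (P : S -> 'I_m -> S -> R) (c : S -> 'I_m -> R) (gamma : R)
  (pi : S -> 'rV[R]_m) (s : S) (a : 'I_m) : R :=
  c s a + gamma * \sum_s' P s a s' * Vs P c gamma pi s'.

Definition dvisit {R : realType} {S : finType} {m : nat}
  (P : S -> 'I_m -> S -> R) (gamma : R) (pi : S -> 'rV[R]_m) (s s' : S) : R :=
  (1 - gamma) *
  limn (fun n => \sum_(0 <= t < n) gamma ^+ t * state_prob P pi s t s').

Definition dvisit_rho {R : realType} {S : finType} {m : nat}
  (P : S -> 'I_m -> S -> R) (gamma : R) (pi : S -> 'rV[R]_m)
  (rho : S -> R) (s' : S) : R :=
  \sum_s rho s * dvisit P gamma pi s s'.

Definition edom {R : realType} {m : nat} (h : 'rV[R]_m -> \bar R) :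
  set 'rV[R]_m := [set x | (h x < +oo)%E].

(* relative interior of dom h; for a Legendre function int(dom h) is
   nonempty, so the relative interior is the interior *)
Definition rint_dom {R : realType} {m : nat} (h : 'rV[R]_m -> \bar R) :
  set 'rV[R]_m := interior (edom h).

Definition hfin {R : realType} {m : nat} (h : 'rV[R]_m -> \bar R) :
  'rV[R]_m -> R := fun x => fine (h x).

Definition grad {R : realType} {m : nat} (h : 'rV[R]_m -> \bar R)
  (x : 'rV[R]_m) : 'rV[R]_m :=
  \row_(i < m) ('D_(delta_mx ord0 i) (hfin h) x).

Definition proper_fun {R : realType} {m : nat} (h : 'rV[R]_m -> \bar R) : Prop :=
  (forall x, h x != -oo%E) /\ (exists x, (h x < +oo)%E).

Definition closed_fun {R : realType} {m : nat} (h : 'rV[R]_m -> \bar R) : Prop :=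
  closed [set xr : 'rV[R]_m * R | (h xr.1 <= xr.2%:E)%E].

Definition convex_fun {R : realType} {m : nat} (h : 'rV[R]_m -> \bar R) : Prop :=
  forall (x y : 'rV[R]_m) (t : R), 0 < t < 1 ->
    (h (t *: x + (1 - t) *: y)%R <= t%:E * h x + (1 - t)%:E * h y)%E.

Definition strictly_convex_on {R : realType} {m : nat}
  (h : 'rV[R]_m -> \bar R) (C : set 'rV[R]_m) : Prop :=
  forall (x y : 'rV[R]_m) (t : R), C x -> C y -> x != y -> 0 < t < 1 ->
    (h (t *: x + (1 - t) *: y)%R < t%:E * h x + (1 - t)%:E * h y)%E.

Definition essentially_smooth {R : realType} {m : nat}
  (h : 'rV[R]_m -> \bar R) : Prop :=
  [/\ rint_dom h !=set0,
      (forall x, rint_dom h x -> differentiable (hfin h) x) &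
      (forall (u : nat -> 'rV[R]_m) (x : 'rV[R]_m),
          (forall n, rint_dom h (u n)) -> u @ \oo --> x ->
          closure (rint_dom h) x -> ~ rint_dom h x ->
          (fun n => `|grad h (u n)|) @ \oo --> +oo)].

Definition legendre {R : realType} {m : nat} (h : 'rV[R]_m -> \bar R) : Prop :=
  [/\ proper_fun h, closed_fun h, convex_fun h, essentially_smooth h &
      strictly_convex_on h (rint_dom h)].

Definition bregman {R : realType} {m : nat} (h : 'rV[R]_m -> \bar R)
  (p p' : 'rV[R]_m) : R :=
  hfin h p - hfin h p' - \sum_(i < m) grad h p' ord0 i * (p ord0 i - p' ord0 i).

Definition Qdot {R : realType} {S : finType} {m : nat}
  (P : S -> 'I_m -> S -> R) (c : S -> 'I_m -> R) (gamma : R)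
  (pi : S -> 'rV[R]_m) (s : S) (p : 'rV[R]_m) : R :=
  \sum_(a < m) Qsa P c gamma pi s a * p ord0 a.

Definition is_PMD_sequence {R : realType} {S : finType} {m : nat}
  (P : S -> 'I_m -> S -> R) (c : S -> 'I_m -> R) (gamma : R)
  (h : 'rV[R]_m -> \bar R) (eta : nat -> R) (pi : nat -> S -> 'rV[R]_m) : Prop :=
  forall k s,
    in_simplex (pi k.+1 s) /\
    forall p, in_simplex p ->
      eta k * Qdot P c gamma (pi k) s (pi k.+1 s) + bregman h (pi k.+1 s) (pi k s)
      <= eta k * Qdot P c gamma (pi k) s p + bregman h p (pi k s).

Definition Dstar {R : realType} {S : finType} {m : nat}
  (P : S -> 'I_m -> S -> R) (gamma : R) (h : 'rV[R]_m -> \bar R)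
  (rho : S -> R) (pistar : S -> 'rV[R]_m) (pik : S -> 'rV[R]_m) : R :=
  \sum_s dvisit_rho P gamma pistar rho s * bregman h (pistar s) (pik s).

From HB Require Import structures.
From mathcomp Require Import all_boot all_order all_algebra.
From mathcomp Require Import all_classical all_reals all_analysis.
From mathcomp Require Import ring lra.
Import Order.TTheory GRing.Theory Num.Theory.
Import numFieldNormedType.Exports.
Local Open Scope classical_set_scope.
Local Open Scope ring_scope.

(* Each mirror-descent step is a Bregman proximal step, so the three-point lemma with
   comparator pistar_s gives
     eta <Q_s(pi_k), pi_{k+1,s} - pistar_s> <= D(pistar_s, pi_{k,s}) - D(pistar_s, pi_{k+1,s}).
   Comparing with p = pi_{k,s} shows <Q_s(pi_k), pi_{k+1,s}> <= V_s(pi_k), so by the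
   performance difference lemma every step improves the value at every state and
   V_s(pi_{k+1}) <= <Q_s(pi_k), pi_{k+1,s}>.  Averaging over d_rho(pistar) and using the
   performance difference lemma for (pi_k, pistar) gives
     (1 - gamma) (V_rho(pi_k) - V_rho(pistar)) <= (D*_k - D*_{k+1}) / eta + W_k - W_{k+1}
   with W_k = sum_s d_rho,s(pistar) V_s(pi_k) in [0, 1/(1 - gamma)].  This telescopes, and
   since V_rho(pi_k) is nonincreasing the last iterate is bounded by the average.
   The Legendre hypothesis keeps the iterates in int dom h, where h is differentiable:
   essential smoothness makes the gradient blow up at the boundary, whereas minimality of
   the step bounds it on the segment towards an interior point of the simplex. *)

Section DiscountedSums.
Context {R : realType} {gamma : R}.
Hypotheses (gamma_ge0 : 0 <= gamma) (gamma_lt1 : gamma < 1).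

Definition discounted_sum (u : nat -> R) n := \sum_(0 <= t < n) gamma ^+ t * u t.

Lemma geometric_sum_le n : \sum_(0 <= t < n) gamma ^+ t <= (1 - gamma)^-1.
Proof.
have one_sub_gamma_gt0 : 0 < 1 - gamma by rewrite subr_gt0.
have geometric_sum : (1 - gamma) * \sum_(0 <= t < n) gamma ^+ t = 1 - gamma ^+ n.
  elim: n => [|n IH]; first by rewrite big_geq // expr0 mulr0 subrr.
  by rewrite big_nat_recr //= mulrDr IH exprS; ring.
rewrite -[leRHS]mulr1 ler_pdivlMl // geometric_sum lerBlDr lerDl.
exact: exprn_ge0.
Qed.

Section Bounded.
Context {u : nat -> R} {B : R}.
Hypothesis u_bounds : forall t, 0 <= u t <= B.

Lemma discounted_sum_ge0 n : 0 <= discounted_sum u n.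
Proof.
apply: sumr_ge0 => t _; apply: mulr_ge0; first exact: exprn_ge0.
by case/andP: (u_bounds t).
Qed.

Lemma discounted_sum_le n : discounted_sum u n <= B / (1 - gamma).
Proof.
have B_ge0 : 0 <= B by case/andP: (u_bounds 0%N); exact: le_trans.
apply: (@le_trans _ _ (\sum_(0 <= t < n) gamma ^+ t * B)).
  apply: ler_sum => t _; apply: ler_wpM2l; first exact: exprn_ge0.
  by case/andP: (u_bounds t).
by rewrite -mulr_suml mulrC ler_wpM2l // geometric_sum_le.
Qed.

Lemma discounted_sum_cvg : discounted_sum u @ \oo --> limn (discounted_sum u).
Proof.
apply: nondecreasing_is_cvgn; last first.
  by exists (B / (1 - gamma)) => _ [n _ <-]; exact: discounted_sum_le.
apply/nondecreasing_seqP => n; rewrite /discounted_sum big_nat_recr //= lerDl.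
by apply: mulr_ge0; [exact: exprn_ge0 | case/andP: (u_bounds n)].
Qed.

Lemma limn_discounted_sum_ge0 : 0 <= limn (discounted_sum u).
Proof.
apply: (cvgr_to_ge discounted_sum_cvg); apply: nearW; exact: discounted_sum_ge0.
Qed.

Lemma limn_discounted_sum_le : limn (discounted_sum u) <= B / (1 - gamma).
Proof.
apply: (cvgr_to_le discounted_sum_cvg); apply: nearW; exact: discounted_sum_le.
Qed.

End Bounded.
End DiscountedSums.
Arguments discounted_sum {R} gamma u n.

Lemma sum_indicatorl {R : pzSemiRingType} {S : finType} (F : S -> R) s :
  \sum_y (y == s)%:R * F y = F s.
Proof.
by rewrite (bigD1 s) //= eqxx mul1r big1 ?addr0 // => y /negbTE ->; rewrite mul0r.
Qed.

Lemma sum_indicatorr {R : pzSemiRingType} {S : finType} (F : S -> R) s :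
  \sum_y F y * (s == y)%:R = F s.
Proof.
rewrite (bigD1 s) //= eqxx mulr1 big1 ?addr0 // => y.
by rewrite eq_sym => /negbTE ->; rewrite mulr0.
Qed.

Definition policy_kernel {R : realType} {S : finType} {m : nat}
  (P : S -> 'I_m -> S -> R) (pol : S -> 'rV[R]_m) x y := \sum_(a < m) pol x ord0 a * P x a y.

Definition policy_cost {R : realType} {S : finType} {m : nat}
  (c : S -> 'I_m -> R) (pol : S -> 'rV[R]_m) x := \sum_(a < m) pol x ord0 a * c x a.

Definition advantage {R : realType} {S : finType} {m : nat}
  (P : S -> 'I_m -> S -> R) (c : S -> 'I_m -> R) (gamma : R) (pol1 pol2 : S -> 'rV[R]_m) y :=
  Qdot P c gamma pol1 y (pol2 y) - Vs P c gamma pol1 y.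

Section MDP.
Context {R : realType} {S : finType} {m : nat}.
Context {P : S -> 'I_m -> S -> R} {c : S -> 'I_m -> R} {gamma : R}.
Hypothesis mdp : is_MDP P c gamma.

Let P_ge0 : forall s a s', 0 <= P s a s'. Proof. by case: mdp. Qed.
Let P_sum1 : forall s a, \sum_s' P s a s' = 1. Proof. by case: mdp. Qed.
Let c_bounds : forall s a, 0 <= c s a <= 1. Proof. by case: mdp. Qed.
Let gamma_ge0 : 0 <= gamma. Proof. by case: mdp => _ _ _ /andP[]. Qed.
Let gamma_lt1 : gamma < 1. Proof. by case: mdp => _ _ _ /andP[]. Qed.

Local Notation V := (Vs P c gamma).

Section Trajectories.
Context {pol : S -> 'rV[R]_m}.
Local Notation K := (policy_kernel P pol).
Local Notation prob := (state_prob P pol).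

Lemma state_probS s t z : prob s t.+1 z = \sum_x prob s t x * K x z.
Proof. by []. Qed.

Lemma state_probS_first s t z : prob s t.+1 z = \sum_y K s y * prob y t z.
Proof.
elim: t z => [|t IH] z; first by rewrite state_probS sum_indicatorl sum_indicatorr.
rewrite state_probS; under eq_bigr do rewrite IH mulr_suml.
rewrite exchange_big /=; apply: eq_bigr => y _.
by rewrite mulr_sumr; apply: eq_bigr => x _; rewrite mulrA.
Qed.

Lemma sum_state_probS s t (F : S -> R) :
  \sum_y prob s t y * \sum_z K y z * F z = \sum_z prob s t.+1 z * F z.
Proof.
under [RHS]eq_bigr do rewrite state_probS mulr_suml.
rewrite [RHS]exchange_big /=; apply: eq_bigr => y _.
by rewrite mulr_sumr; apply: eq_bigr => z _; rewrite mulrA.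
Qed.

Lemma exp_costE s t : exp_cost P c pol s t = \sum_x prob s t x * policy_cost c pol x.
Proof. by []. Qed.

Lemma exp_cost0 s : exp_cost P c pol s 0 = policy_cost c pol s.
Proof. exact: sum_indicatorl. Qed.

Lemma exp_costS_first s t :
  exp_cost P c pol s t.+1 = \sum_y K s y * exp_cost P c pol y t.
Proof.
rewrite exp_costE; under eq_bigr do rewrite state_probS_first mulr_suml.
rewrite exchange_big /=; apply: eq_bigr => y _.
by rewrite exp_costE mulr_sumr; apply: eq_bigr => x _; rewrite mulrA.
Qed.

Lemma discounted_sum_exp_costS s n :
  discounted_sum gamma (exp_cost P c pol s) n.+1 =
  policy_cost c pol s + gamma * \sum_y K s y * discounted_sum gamma (exp_cost P c pol y) n.
Proof.
rewrite /discounted_sum big_nat_recl // expr0 mul1r exp_cost0; congr (_ + _).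
under eq_bigr do rewrite exp_costS_first mulr_sumr.
rewrite exchange_big /= mulr_sumr; apply: eq_bigr => y _.
rewrite !mulr_sumr; apply: eq_bigr => t _; rewrite exprS; ring.
Qed.

Hypothesis pol_policy : is_policy pol.

Lemma policy_kernel_ge0 x y : 0 <= K x y.
Proof. by apply: sumr_ge0 => a _; apply: mulr_ge0 => //; exact: (pol_policy x).1. Qed.

Lemma policy_kernel_sum1 x : \sum_y K x y = 1.
Proof.
rewrite exchange_big /=; under eq_bigr do rewrite -mulr_sumr P_sum1 mulr1.
exact: (pol_policy x).2.
Qed.

Lemma policy_cost_bounds x : 0 <= policy_cost c pol x <= 1.
Proof.
have [pol_ge0 pol_sum1] := pol_policy x.
apply/andP; split.
  by apply: sumr_ge0 => a _; apply: mulr_ge0 => //; case/andP: (c_bounds x a).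
rewrite -pol_sum1; apply: ler_sum => a _.
by rewrite ler_piMr //; case/andP: (c_bounds x a).
Qed.

Lemma state_prob_ge0 s t y : 0 <= prob s t y.
Proof.
elim: t y => [|t IH] y; first exact: ler0n.
by apply: sumr_ge0 => x _; apply: mulr_ge0 => //; exact: policy_kernel_ge0.
Qed.

Lemma state_prob_sum1 s t : \sum_y prob s t y = 1.
Proof.
elim: t => [|t IH]; first by rewrite /= (bigD1 s) //= eqxx big1 ?addr0 // => y /negbTE ->.
under eq_bigr do rewrite state_probS.
rewrite exchange_big /= -IH; apply: eq_bigr => x _.
by rewrite -mulr_sumr policy_kernel_sum1 mulr1.
Qed.

Lemma state_prob_bounds s t y : 0 <= prob s t y <= 1.
Proof.
rewrite state_prob_ge0 -(state_prob_sum1 s t) (bigD1 y) //= lerDl.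
by apply: sumr_ge0 => *; exact: state_prob_ge0.
Qed.

Lemma exp_cost_bounds s t : 0 <= exp_cost P c pol s t <= 1.
Proof.
rewrite exp_costE; apply/andP; split.
  apply: sumr_ge0 => x _; apply: mulr_ge0; first exact: state_prob_ge0.
  by case/andP: (policy_cost_bounds x).
rewrite -(state_prob_sum1 s t); apply: ler_sum => x _.
by rewrite ler_piMr ?state_prob_ge0 //; case/andP: (policy_cost_bounds x).
Qed.

Lemma Vs_cvg s : discounted_sum gamma (exp_cost P c pol s) @ \oo --> V pol s.
Proof. exact: (discounted_sum_cvg gamma_ge0 gamma_lt1 (exp_cost_bounds s)). Qed.

Lemma Vs_ge0 s : 0 <= V pol s.
Proof. exact: (limn_discounted_sum_ge0 gamma_ge0 gamma_lt1 (exp_cost_bounds s)). Qed.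

Lemma Vs_le s : V pol s <= 1 / (1 - gamma).
Proof. exact: (limn_discounted_sum_le gamma_ge0 gamma_lt1 (exp_cost_bounds s)). Qed.

Lemma Vs_bellman s : V pol s = policy_cost c pol s + gamma * \sum_y K s y * V pol y.
Proof.
have step : (fun n => discounted_sum gamma (exp_cost P c pol s) n.+1) @ \oo -->
    policy_cost c pol s + gamma * \sum_y K s y * V pol y.
  under eq_fun do rewrite discounted_sum_exp_costS.
  apply: cvgD; first exact: cvg_cst.
  apply: cvgMr; apply: cvg_big => [|y _]; first exact: add_continuous.
  by apply: cvgMr; exact: Vs_cvg.
rewrite cvg_shiftS in step.
exact: (cvg_unique _ (Vs_cvg s) step).
Qed.

End Trajectories.

Lemma Qdot_policy pol1 pol2 y : Qdot P c gamma pol1 y (pol2 y) =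
  policy_cost c pol2 y + gamma * \sum_z policy_kernel P pol2 y z * V pol1 z.
Proof.
rewrite /Qdot /Qsa; under eq_bigr do rewrite mulrDl.
rewrite big_split /=; congr (_ + _); first by apply: eq_bigr => a _; rewrite mulrC.
rewrite mulr_sumr; under [RHS]eq_bigr do rewrite mulr_suml mulr_sumr.
under eq_bigr do rewrite mulr_sumr mulr_suml.
rewrite [RHS]exchange_big /=; apply: eq_bigr => a _; apply: eq_bigr => z _; ring.
Qed.

Lemma Qdot_self {pol} x : is_policy pol -> Qdot P c gamma pol x (pol x) = V pol x.
Proof. by move=> pol_policy; rewrite Qdot_policy -Vs_bellman. Qed.

Section Visitation.
Context {pol : S -> 'rV[R]_m}.
Hypothesis pol_policy : is_policy pol.
Local Notation prob := (state_prob P pol).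

Lemma visit_cvg s y : discounted_sum gamma (fun t => prob s t y) @ \oo -->
  limn (discounted_sum gamma (fun t => prob s t y)).
Proof. exact: (discounted_sum_cvg gamma_ge0 gamma_lt1 (state_prob_bounds pol_policy s ^~ y)). Qed.

Lemma dvisit_ge0 s y : 0 <= dvisit P gamma pol s y.
Proof.
apply: mulr_ge0; first by rewrite subr_ge0 ltW.
exact: (limn_discounted_sum_ge0 gamma_ge0 gamma_lt1 (state_prob_bounds pol_policy s ^~ y)).
Qed.

Lemma dvisit_sum_le1 s : \sum_y dvisit P gamma pol s y <= 1.
Proof.
have one_sub_gamma_gt0 : 0 < 1 - gamma by rewrite subr_gt0.
rewrite /dvisit -mulr_sumr -[leRHS](mulfV (lt0r_neq0 one_sub_gamma_gt0)).
apply: ler_wpM2l; first exact: ltW.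
have cvg_total : (fun n => \sum_y discounted_sum gamma (fun t => prob s t y) n) @ \oo -->
    \sum_y limn (discounted_sum gamma (fun t => prob s t y)).
  by apply: cvg_big => [|y _]; [exact: add_continuous | exact: visit_cvg].
apply: (cvgr_to_le cvg_total); apply: nearW => n; rewrite /discounted_sum exchange_big /=.
under eq_bigr do rewrite -mulr_sumr (state_prob_sum1 pol_policy) mulr1.
exact: geometric_sum_le.
Qed.

Lemma dvisit_rho_ge0 rho : is_state_distr rho -> forall y, 0 <= dvisit_rho P gamma pol rho y.
Proof. by move=> [rho_ge0 _] y; apply: sumr_ge0 => s _; rewrite mulr_ge0 ?dvisit_ge0. Qed.

Lemma dvisit_rho_sum_le1 rho : is_state_distr rho -> \sum_y dvisit_rho P gamma pol rho y <= 1.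
Proof.
move=> [rho_ge0 rho_sum1]; rewrite /dvisit_rho exchange_big /= -rho_sum1.
by apply: ler_sum => s _; rewrite -mulr_sumr ler_piMr ?dvisit_sum_le1.
Qed.

End Visitation.

Section PerformanceDifference.
Context {pol1 pol2 : S -> 'rV[R]_m}.
Hypotheses (pol1_policy : is_policy pol1) (pol2_policy : is_policy pol2).
Local Notation A := (advantage P c gamma pol1 pol2).
Local Notation prob := (state_prob P pol2).

Lemma performance_difference_partial x n :
  discounted_sum gamma (fun t => \sum_y prob x t y * A y) n =
  discounted_sum gamma (exp_cost P c pol2 x) n
  + gamma ^+ n * \sum_y prob x n y * V pol1 y - V pol1 x.
Proof.
elim: n => [|n IH].
  by rewrite /discounted_sum !big_geq // expr0 mul1r sum_indicatorl add0r subrr.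
have advantage_step : \sum_y prob x n y * A y = exp_cost P c pol2 x n
    + gamma * \sum_z prob x n.+1 z * V pol1 z - \sum_y prob x n y * V pol1 y.
  rewrite -sum_state_probS exp_costE mulr_sumr -!big_split /= -sumrB.
  by apply: eq_bigr => y _; rewrite /advantage Qdot_policy; ring.
rewrite /discounted_sum big_nat_recr //= -/(discounted_sum _ _ n) IH advantage_step.
rewrite /discounted_sum big_nat_recr //= exprS; ring.
Qed.

Lemma performance_difference_cvg x :
  discounted_sum gamma (fun t => \sum_y prob x t y * A y) @ \oo --> V pol2 x - V pol1 x.
Proof.
rewrite (funext (performance_difference_partial x)).
rewrite -[V pol2 x]addr0; apply: cvgB; last exact: cvg_cst.
apply: cvgD; first exact: (Vs_cvg pol2_policy).
apply: (@squeeze_cvgr _ _ _ _ (fun=> 0) (fun n => gamma ^+ n * (1 / (1 - gamma)))).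
- apply: nearW => n; apply/andP; split.
    apply: mulr_ge0; first exact: exprn_ge0.
    by apply: sumr_ge0 => y _; rewrite mulr_ge0 ?(state_prob_ge0 pol2_policy) ?(Vs_ge0 pol1_policy).
  apply: ler_wpM2l; first exact: exprn_ge0.
  apply: (@le_trans _ _ (\sum_y prob x n y * (1 / (1 - gamma)))).
    apply: ler_sum => y _; apply: ler_wpM2l; first exact: (state_prob_ge0 pol2_policy).
    exact: (Vs_le pol1_policy).
  by rewrite -mulr_suml (state_prob_sum1 pol2_policy) mul1r.
- exact: cvg_cst.
- rewrite -(mul0r (1 / (1 - gamma))); apply: cvgMl; apply: cvg_expr.
  by rewrite ger0_norm.
Qed.

Lemma Vs_sub_le_advantage x : (forall y, A y <= 0) -> V pol2 x - V pol1 x <= A x.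
Proof.
move=> A_le0; have := performance_difference_cvg x; rewrite -cvg_shiftS => cvg_diff.
apply: (cvgr_to_le cvg_diff); apply: nearW => n /=.
rewrite /discounted_sum big_nat_recl // expr0 mul1r /= sum_indicatorl gerDl.
apply: sumr_le0 => t _; apply: mulr_ge0_le0; first exact: exprn_ge0.
apply: sumr_le0 => y _; apply: mulr_ge0_le0; last exact: A_le0.
exact: (state_prob_ge0 pol2_policy x t.+1).
Qed.

Lemma performance_difference s :
  V pol2 s - V pol1 s = \sum_y A y * limn (discounted_sum gamma (fun t => prob s t y)).
Proof.
have exchange : discounted_sum gamma (fun t => \sum_y prob s t y * A y) =
    (fun n => \sum_y A y * discounted_sum gamma (fun t => prob s t y) n).
  apply: funext => n; rewrite /discounted_sum.
  under eq_bigr do rewrite mulr_sumr.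
  rewrite exchange_big /=; apply: eq_bigr => y _.
  by rewrite mulr_sumr; apply: eq_bigr => t _; ring.
have cvg_visits : discounted_sum gamma (fun t => \sum_y prob s t y * A y) @ \oo -->
    \sum_y A y * limn (discounted_sum gamma (fun t => prob s t y)).
  rewrite exchange; apply: cvg_big => [|y _]; first exact: add_continuous.
  by apply: cvgMr; exact: (visit_cvg pol2_policy).
exact: (cvg_unique _ (performance_difference_cvg s) cvg_visits).
Qed.

Lemma performance_difference_visit (rho : S -> R) :
  (1 - gamma) * \sum_s rho s * (V pol2 s - V pol1 s) = \sum_y dvisit_rho P gamma pol2 rho y * A y.
Proof.
under eq_bigr do rewrite performance_difference mulr_sumr.
rewrite exchange_big /= mulr_sumr; apply: eq_bigr => y _.
rewrite /dvisit_rho /dvisit mulr_suml mulr_sumr; apply: eq_bigr => s _; ring.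
Qed.

End PerformanceDifference.

End MDP.

Section Simplex.
Context {R : realType} {m : nat}.

Definition dotr (w : 'I_m -> R) (v : 'rV[R]_m) := \sum_a w a * v ord0 a.

Lemma dotrDZ w x s v : dotr w (x + s *: v) = dotr w x + s * dotr w v.
Proof.
rewrite /dotr mulr_sumr -big_split /=; apply: eq_bigr => a _; rewrite !mxE; ring.
Qed.

Lemma dotrB w x y : dotr w (x - y) = dotr w x - dotr w y.
Proof. by rewrite /dotr -sumrB; apply: eq_bigr => a _; rewrite !mxE; ring. Qed.

Lemma dotr_delta w i : dotr w (delta_mx ord0 i) = w i.
Proof.
rewrite /dotr (bigD1 i) //= mxE !eqxx mulr1 big1 ?addr0 // => a /negbTE ai.
by rewrite mxE eqxx ai mulr0.
Qed.

Lemma dotrBl (w1 w2 : 'I_m -> R) v : dotr (fun a => w1 a - w2 a) v = dotr w1 v - dotr w2 v.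
Proof. by rewrite /dotr -sumrB; apply: eq_bigr => a _; ring. Qed.

Lemma in_simplex_segment {x p : 'rV[R]_m} {s : R} :
  in_simplex x -> in_simplex p -> 0 <= s <= 1 -> in_simplex (x + s *: (p - x)).
Proof.
move=> [x_ge0 x_sum1] [p_ge0 p_sum1] /andP[s_ge0 s_le1]; split.
  move=> a; rewrite !mxE.
  have -> : x ord0 a + s * (p ord0 a - x ord0 a) = (1 - s) * x ord0 a + s * p ord0 a by ring.
  by rewrite addr_ge0 // mulr_ge0 // subr_ge0.
have sum_dotr (v : 'rV[R]_m) : \sum_a v ord0 a = dotr (fun=> 1) v.
  by apply: eq_bigr => a _; rewrite mul1r.
by rewrite sum_dotr dotrDZ dotrB -!sum_dotr x_sum1 p_sum1 subrr mulr0 addr0.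
Qed.

Lemma in_rint_simplex_segment {x y : 'rV[R]_m} {t : R} :
  in_simplex x -> in_rint_simplex y -> 0 < t <= 1 -> in_rint_simplex (x + t *: (y - x)).
Proof.
move=> x_simplex [y_simplex y_gt0] /andP[t_gt0 t_le1]; split.
  by apply: in_simplex_segment => //; rewrite ltW.
move=> a; rewrite !mxE.
have -> : x ord0 a + t * (y ord0 a - x ord0 a) = (1 - t) * x ord0 a + t * y ord0 a by ring.
by rewrite ltr_wpDl ?mulr_gt0 // mulr_ge0 ?subr_ge0 //; exact: x_simplex.1.
Qed.

Lemma rV_norm_le (v : 'rV[R]_m) (K : R) : 0 <= K -> (forall j, `|v ord0 j| <= K) -> `|v| <= K.
Proof.
move=> K_ge0 v_le; change (mx_norm v <= K); rewrite mx_normrE.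
by apply: bigmax_le => // -[i j] _; rewrite (ord1 i).
Qed.

End Simplex.

Section Legendre.
Context {R : realType} {m : nat} {h : 'rV[R]_m -> \bar R}.
Hypothesis h_legendre : legendre h.
Local Notation hf := (hfin h).
Local Notation g x := (grad h x ord0).

Lemma hfinE {x} : edom h x -> h x = (hf x)%:E.
Proof.
case: h_legendre => -[h_neqNy _] _ _ _ _ hx.
by rewrite /hfin fineK // fin_numE h_neqNy /= (lt_eqF hx).
Qed.

Lemma hfin_convex {x y t} : edom h x -> edom h y -> 0 < t < 1 ->
  edom h (t *: x + (1 - t) *: y) /\ hf (t *: x + (1 - t) *: y) <= t * hf x + (1 - t) * hf y.
Proof.
move=> hx hy t01; case: h_legendre => _ _ h_convex _ _.
have := h_convex x y t t01; rewrite (hfinE hx) (hfinE hy) -!EFinM -EFinD => h_le.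
have hz : edom h (t *: x + (1 - t) *: y) by exact: le_lt_trans h_le (ltry _).
by split => //; move: h_le; rewrite (hfinE hz) lee_fin.
Qed.

Lemma rint_differentiable {x} : rint_dom h x -> differentiable hf x.
Proof. by case: h_legendre => _ _ _ [_ h_diff _] _; exact: h_diff. Qed.

Lemma rint_edom {x} : rint_dom h x -> edom h x.
Proof. exact: interior_subset. Qed.

Lemma derive_hfin x v : differentiable hf x -> 'D_v hf x = dotr (g x) v.
Proof.
move=> hx; rewrite deriveE // {1}(row_sum_delta v) linear_sum.
by apply: eq_bigr => i _; rewrite linearZ /= -deriveE // /grad mxE mulrC.
Qed.

Lemma difference_quotient_cvg {x} v : differentiable hf x ->
  (fun s => (hf (x + s *: v) - hf x) / s) @ 0^'+ --> dotr (g x) v.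
Proof.
move=> hx; rewrite -derive_hfin //.
have dv : (fun s => s^-1 *: ((hf \o shift x) (s *: v) - hf x)) @ 0^' --> 'D_v hf x.
  exact: diff_derivable.
apply: cvg_trans (cvg_dnbhs_at_right dv); apply: near_eq_cvg; near=> s => /=.
by rewrite [s *: v + x]addrC mulrC.
Unshelve. all: by end_near.
Qed.

Section DirectionalBounds.
Variables (x v : 'rV[R]_m) (B : R).
Hypothesis x_diff : differentiable hf x.

Lemma dotr_grad_le : (forall s, 0 < s < 1 -> (hf (x + s *: v) - hf x) / s <= B) ->
  dotr (g x) v <= B.
Proof.
move=> quotient_le; apply: (cvgr_to_le (difference_quotient_cvg v x_diff)).
near=> s; apply: quotient_le; apply/andP; split.
  by near: s; exact: nbhs_right_gt.
by near: s; exact: nbhs_right_lt ltr01.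
Unshelve. all: by end_near.
Qed.

Lemma dotr_grad_ge : (forall s, 0 < s < 1 -> B <= (hf (x + s *: v) - hf x) / s) ->
  B <= dotr (g x) v.
Proof.
move=> quotient_ge; apply: (cvgr_to_ge (difference_quotient_cvg v x_diff)).
near=> s; apply: quotient_ge; apply/andP; split.
  by near: s; exact: nbhs_right_gt.
by near: s; exact: nbhs_right_lt ltr01.
Unshelve. all: by end_near.
Qed.

End DirectionalBounds.

Lemma gradient_inequality {x z} : rint_dom h x -> edom h z -> hf x + dotr (g x) (z - x) <= hf z.
Proof.
move=> hx hz; rewrite -lerBrDl; apply: dotr_grad_le; first exact: rint_differentiable.
move=> s /andP[s_gt0 s_lt1].
have [_ h_le] := hfin_convex hz (rint_edom hx) (introT andP (conj s_gt0 s_lt1)).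
have -> : x + s *: (z - x) = s *: z + (1 - s) *: x by apply/rowP => a; rewrite !mxE; ring.
by rewrite ler_pdivrMr //; lra.
Qed.

Lemma bregmanE p q : bregman h p q = hf p - hf q - dotr (g q) (p - q).
Proof. by rewrite /bregman /dotr; congr (_ - _); apply: eq_bigr => i _; rewrite !mxE. Qed.

Lemma bregman_ge0 {p q} : rint_dom h q -> edom h p -> 0 <= bregman h p q.
Proof. by move=> hq hp; have := gradient_inequality hq hp; rewrite bregmanE; lra. Qed.

Lemma bregman_self p : bregman h p p = 0.
Proof. by rewrite /bregman subrr big1 ?subr0 // => i _; rewrite subrr mulr0. Qed.

Lemma rint_dom_axes {y} : rint_dom h y -> exists2 r, 0 < r &
  forall i, edom h (y + r *: delta_mx ord0 i) /\ edom h (y + (- r) *: delta_mx ord0 i).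
Proof.
move=> /nbhs_ballP[e e_gt0 ball_dom]; exists (e / 2); first by rewrite divr_gt0.
have axis_dom s : `|s| < e -> forall i, edom h (y + s *: delta_mx ord0 i).
  move=> s_lt i; apply: ball_dom.
  rewrite -ball_normE /= opprD addrA subrr add0r normrN normrZ.
  apply: le_lt_trans s_lt; rewrite ler_piMr //.
  by apply: rV_norm_le => // j; rewrite mxE; case: (_ && _); rewrite ?normr1 ?normr0.
move=> i; split; apply: axis_dom; rewrite ?normrN ger0_norm ?divr_ge0 ?ltW //;
  by rewrite ltr_pdivrMr // ltr_pMr // ltr1n.
Qed.

Definition prox_objective q pk p := dotr q p + bregman h p pk.

Section Prox.
Context {q : 'I_m -> R} {pk pp y : 'rV[R]_m}.
Local Notation G := (prox_objective q pk).
Local Notation w := (fun a => q a - g pk a).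

Lemma prox_objectiveE p : G p = dotr w p + hf p - hf pk + dotr (g pk) pk.
Proof. by rewrite /prox_objective bregmanE dotrBl dotrB; ring. Qed.

Hypotheses (pp_simplex : in_simplex pp) (pp_min : forall p, in_simplex p -> G pp <= G p).

Lemma prox_first_order {p} : rint_dom h pp -> in_simplex p ->
  - dotr w (p - pp) <= dotr (g pp) (p - pp).
Proof.
move=> pp_rint p_simplex; apply: dotr_grad_ge; first exact: rint_differentiable.
move=> s /andP[s_gt0 s_lt1].
have s01 : 0 <= s <= 1 by rewrite !ltW.
have := pp_min _ (in_simplex_segment pp_simplex p_simplex s01).
by rewrite !prox_objectiveE dotrDZ ler_pdivlMr //; lra.
Qed.

Lemma prox_three_point {p} : rint_dom h pp -> in_simplex p -> G pp <= G p - bregman h p pp.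
Proof.
move=> pp_rint p_simplex; have := prox_first_order pp_rint p_simplex.
by rewrite !prox_objectiveE bregmanE dotrB; lra.
Qed.

Hypothesis simplex_dom : forall p, in_simplex p -> edom h p.
Hypothesis rint_simplex_dom : forall p, in_rint_simplex p -> rint_dom h p.
Hypothesis y_rint : in_rint_simplex y.

Local Notation L := (dotr w (y - pp)).
Local Notation xt t := (pp + t *: (y - pp)).

Lemma segment_in_rint_simplex {t} : 0 < t < 1 -> in_rint_simplex (xt t).
Proof.
by move=> /andP[t_gt0 t_lt1]; apply: in_rint_simplex_segment => //; rewrite t_gt0 ltW.
Qed.

Lemma prox_segment_value {t} : 0 < t < 1 -> hf pp <= hf (xt t) + t * L.
Proof.
move=> t01; have := pp_min _ (segment_in_rint_simplex t01).1.
by rewrite !prox_objectiveE dotrDZ; lra.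
Qed.

Lemma prox_segment_slope {t} : 0 < t < 1 -> - L <= dotr (g (xt t)) (y - pp).
Proof.
move=> t01; have /andP[t_gt0 _] := t01.
have value_le := prox_segment_value t01.
have := gradient_inequality (rint_simplex_dom _ (segment_in_rint_simplex t01))
  (simplex_dom _ pp_simplex).
rewrite dotrB dotrDZ => grad_ineq.
by rewrite -(ler_pM2l t_gt0); lra.
Qed.

Lemma prox_segment_coord {t} j {s} : 0 < t < 1 -> edom h (y + s *: delta_mx ord0 j) ->
  s * g (xt t) j <= hf (y + s *: delta_mx ord0 j) - hf pp + L.
Proof.
move=> t01 z_dom; have /andP[_ t_lt1] := t01.
have := prox_segment_value t01.
have : (1 - t) * - L <= (1 - t) * dotr (g (xt t)) (y - pp).
  by apply: ler_wpM2l; [rewrite subr_ge0 ltW | exact: prox_segment_slope].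
have := gradient_inequality (rint_simplex_dom _ (segment_in_rint_simplex t01)) z_dom.
rewrite !dotrB !dotrDZ !dotrB dotr_delta; lra.
Qed.

(* Convexity towards the points y +- r e_j of dom h bounds every partial derivative of h
   on the segment by the values of h there, uniformly in t. *)
Lemma prox_segment_grad_bounded : exists K, forall t, 0 < t < 1 -> `|grad h (xt t)| <= K.
Proof.
have [r r_gt0 axes_dom] := rint_dom_axes (rint_simplex_dom _ y_rint).
pose M := \big[Num.max/0]_i
  Num.max (hf (y + r *: delta_mx ord0 i)) (hf (y + (- r) *: delta_mx ord0 i)).
exists `|(M - hf pp + L) / r| => t t01; apply: rV_norm_le => // j.
apply: le_trans (ler_norm _); rewrite ler_norml lerNl !ler_pdivlMr //.
have /andP[plus_le minus_le] :
    (hf (y + r *: delta_mx ord0 j) <= M) && (hf (y + (- r) *: delta_mx ord0 j) <= M).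
  by rewrite -ge_max; exact: le_bigmax.
have := prox_segment_coord j t01 (axes_dom j).1.
have := prox_segment_coord j t01 (axes_dom j).2.
lra.
Qed.

Lemma prox_in_rint : rint_dom h pp.
Proof.
apply: contrapT => pp_not_rint.
have [K grad_le] := prox_segment_grad_bounded.
pose tn n : R := 2^-1 ^+ n.+1.
have tn01 n : 0 < tn n < 1.
  by rewrite exprn_gt0 ?invr_gt0 //= exprn_ilt1 ?invr_ge0 // invf_lt1 // ltr1n.
have tn_cvg : tn @ \oo --> 0.
  rewrite /tn (cvg_shiftS (fun n => (2^-1 : R) ^+ n)); apply: cvg_expr.
  by rewrite ger0_norm ?invr_ge0 // invf_lt1 // ltr1n.
have xt_cvg : (fun n => xt (tn n)) @ \oo --> pp.
  rewrite -[X in _ --> X]addr0 -(scale0r (y - pp)).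
  by apply: cvgD; [exact: cvg_cst | exact: cvgZl].
have xt_rint n : rint_dom h (xt (tn n)).
  exact: rint_simplex_dom _ (segment_in_rint_simplex (tn01 n)).
have pp_closure : closure (rint_dom h) pp.
  apply: (closed_cvg _ (@closed_closure _ _) _ _ xt_cvg).
  by apply: nearW => n; apply: subset_closure; exact: xt_rint.
case: h_legendre => _ _ _ [_ _ grad_blowup] _.
have /cvgryPgt/(_ K)[N _ grad_gt] := grad_blowup _ pp xt_rint xt_cvg pp_closure pp_not_rint.
by have := grad_gt N (leqnn N); rewrite ltNge grad_le.
Qed.

End Prox.
End Legendre.
Arguments prox_objective {R m} h q pk p.

Lemma Vrho_optimal_le_Vstar {R : realType} {S : finType} {m : nat}
    {P : S -> 'I_m -> S -> R} {c : S -> 'I_m -> R} {gamma : R} {rho pistar} :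
  (forall s, 0 <= rho s) -> is_optimal_policy P c gamma pistar ->
  Vrho P c gamma rho pistar <= Vstar P c gamma rho.
Proof.
move=> rho_ge0 [pistar_policy pistar_min]; apply: lb_le_inf.
  by exists (Vrho P c gamma rho pistar), pistar.
by move=> _ [pol pol_policy <-]; apply: ler_sum => s _; rewrite ler_wpM2l // pistar_min.
Qed.

Section PolicyMirrorDescent.
Context {R : realType} {S : finType} {m : nat}.
Context {P : S -> 'I_m -> S -> R} {c : S -> 'I_m -> R} {gamma : R}.
Context {h : 'rV[R]_m -> \bar R} {eta : R} { pi : nat -> S -> 'rV[R]_m } {pistar : S -> 'rV[R]_m}.
Hypothesis mdp : is_MDP P c gamma.
Hypothesis h_legendre : legendre h.
Hypothesis simplex_dom : forall p : 'rV[R]_m, in_simplex p -> edom h p.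
Hypothesis rint_simplex_dom : forall p : 'rV[R]_m, in_rint_simplex p -> rint_dom h p.
Hypothesis pistar_optimal : is_optimal_policy P c gamma pistar.
Hypothesis eta_gt0 : 0 < eta.
Hypothesis pi0_rint : is_rint_policy (pi 0%N).
Hypothesis pi_pmd : is_PMD_sequence P c gamma h (fun _ => eta) pi.
Context {rho : S -> R}.
Hypothesis rho_distr : is_state_distr rho.

Local Notation V := (Vs P c gamma).
Local Notation Vr := (Vrho P c gamma rho).
Local Notation d := (dvisit_rho P gamma pistar rho).
Local Notation D k := (Dstar P gamma h rho pistar (pi k)).
Local Notation W k := (\sum_y d y * V (pi k) y).
Local Notation q k s := (fun a => eta * Qsa P c gamma (pi k) s a).

Let one_sub_gamma_gt0 : 0 < 1 - gamma.
Proof. by case: mdp => _ _ _ /andP[_]; rewrite subr_gt0. Qed.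

Let pistar_policy : is_policy pistar. Proof. exact: pistar_optimal.1. Qed.

Lemma pmd_policy k : is_policy (pi k).
Proof. by case: k => [|k] s; [exact: (pi0_rint s).1 | exact: (pi_pmd k s).1]. Qed.

Lemma prox_objective_Qdot k s p :
  prox_objective h (q k s) (pi k s) p = eta * Qdot P c gamma (pi k) s p + bregman h p (pi k s).
Proof.
rewrite /prox_objective /dotr /Qdot mulr_sumr; congr (_ + _).
by apply: eq_bigr => a _; rewrite mulrA.
Qed.

Lemma pmd_prox_min k s p : in_simplex p ->
  prox_objective h (q k s) (pi k s) (pi k.+1 s) <= prox_objective h (q k s) (pi k s) p.
Proof. by move=> p_simplex; rewrite !prox_objective_Qdot; exact: (pi_pmd k s).2. Qed.

Lemma pmd_rint k s : rint_dom h (pi k s).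
Proof.
case: k => [|k]; first exact: rint_simplex_dom.
exact: (prox_in_rint h_legendre (pmd_policy k.+1 s) (pmd_prox_min k s) simplex_dom
  rint_simplex_dom (pi0_rint s)).
Qed.

Lemma pmd_Qdot_le_Vs k s : Qdot P c gamma (pi k) s (pi k.+1 s) <= V (pi k) s.
Proof.
have D_ge0 := bregman_ge0 h_legendre (pmd_rint k s) (simplex_dom _ (pmd_policy k.+1 s)).
have := (pi_pmd k s).2 _ (pmd_policy k s).
rewrite bregman_self addr0 (Qdot_self mdp s (pmd_policy k)) => step_le.
by rewrite -(ler_pM2l eta_gt0); lra.
Qed.

Lemma pmd_Vs_le_Qdot k s : V (pi k.+1) s <= Qdot P c gamma (pi k) s (pi k.+1 s).
Proof.
have adv_le0 y : advantage P c gamma (pi k) (pi k.+1) y <= 0.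
  by rewrite /advantage subr_le0 pmd_Qdot_le_Vs.
have := Vs_sub_le_advantage mdp (pmd_policy k) (pmd_policy k.+1) s adv_le0.
by rewrite /advantage lerD2r.
Qed.

Lemma pmd_Vrho_nonincreasing k : Vr (pi k.+1) <= Vr (pi k).
Proof.
apply: ler_sum => s _; apply: ler_wpM2l; first exact: rho_distr.1.
exact: le_trans (pmd_Vs_le_Qdot k s) (pmd_Qdot_le_Vs k s).
Qed.

Lemma pmd_state_step k s :
  V (pi k) s - Qdot P c gamma (pi k) s (pistar s)
  <= (bregman h (pistar s) (pi k s) - bregman h (pistar s) (pi k.+1 s)) / eta
     + (V (pi k) s - V (pi k.+1) s).
Proof.
have := prox_three_point h_legendre (pmd_policy k.+1 s) (pmd_prox_min k s)
  (pmd_rint k.+1 s) (pistar_policy s).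
rewrite !prox_objective_Qdot => three_point.
have D_ge0 := bregman_ge0 h_legendre (pmd_rint k s) (simplex_dom _ (pmd_policy k.+1 s)).
have V_le : eta * V (pi k.+1) s <= eta * Qdot P c gamma (pi k) s (pi k.+1 s).
  by rewrite ler_pM2l // pmd_Vs_le_Qdot.
suff : V (pi k.+1) s - Qdot P c gamma (pi k) s (pistar s)
    <= (bregman h (pistar s) (pi k s) - bregman h (pistar s) (pi k.+1 s)) / eta by lra.
by rewrite ler_pdivlMr //; lra.
Qed.

Lemma pmd_descent k :
  (1 - gamma) * (Vr (pi k) - Vr pistar) <= (D k - D k.+1) / eta + (W k - W k.+1).
Proof.
have -> : (1 - gamma) * (Vr (pi k) - Vr pistar) =
    \sum_y d y * (V (pi k) y - Qdot P c gamma (pi k) y (pistar y)).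
  have -> : Vr (pi k) - Vr pistar = - \sum_s rho s * (V pistar s - V (pi k) s).
    by rewrite /Vrho -sumrB -sumrN; apply: eq_bigr => s _; ring.
  rewrite mulrN (performance_difference_visit mdp (pmd_policy k) pistar_policy) -sumrN.
  by apply: eq_bigr => y _; rewrite /advantage; ring.
have -> : (D k - D k.+1) / eta + (W k - W k.+1) = \sum_y d y *
    ((bregman h (pistar y) (pi k y) - bregman h (pistar y) (pi k.+1 y)) / eta
     + (V (pi k) y - V (pi k.+1) y)).
  rewrite /Dstar -!sumrB mulr_suml -big_split /=; apply: eq_bigr => y _; ring.
apply: ler_sum => y _; apply: ler_wpM2l; last exact: pmd_state_step.
exact: (dvisit_rho_ge0 mdp pistar_policy _ rho_distr y).
Qed.

Lemma pmd_telescope n :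
  (1 - gamma) * \sum_(0 <= k < n) (Vr (pi k) - Vr pistar) <= (D 0 - D n) / eta + (W 0 - W n).
Proof.
elim: n => [|n IH]; first by rewrite big_geq // mulr0 !subrr mul0r addr0.
by rewrite big_nat_recr //= mulrDr; have := pmd_descent n; lra.
Qed.

Lemma pmd_average_bound n :
  (1 - gamma) * \sum_(0 <= k < n) (Vr (pi k) - Vr pistar) <= D 0 / eta + 1 / (1 - gamma).
Proof.
have d_ge0 := dvisit_rho_ge0 mdp pistar_policy _ rho_distr.
have Dn_ge0 : 0 <= D n / eta.
  apply: divr_ge0; last exact: ltW.
  apply: sumr_ge0 => s _; rewrite mulr_ge0 //.
  exact: (bregman_ge0 h_legendre (pmd_rint n s) (simplex_dom _ (pistar_policy s))).
have Wn_ge0 : 0 <= W n.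
  by apply: sumr_ge0 => y _; rewrite mulr_ge0 // (Vs_ge0 mdp (pmd_policy n)).
have W0_le : W 0 <= 1 / (1 - gamma).
  apply: (@le_trans _ _ (\sum_y d y * (1 / (1 - gamma)))).
    by apply: ler_sum => y _; rewrite ler_wpM2l // (Vs_le mdp (pmd_policy 0)).
  rewrite -mulr_suml; apply: ler_piMl; first by rewrite divr_ge0 ?ltW.
  exact: (dvisit_rho_sum_le1 mdp pistar_policy _ rho_distr).
by have := pmd_telescope n; lra.
Qed.

Lemma pmd_rate k : Vr (pi k) - Vr pistar
  <= (k.+1%:R)^-1 * (D 0 / (eta * (1 - gamma)) + 1 / (1 - gamma) ^+ 2).
Proof.
have Vr_mono : nonincreasing_seq (fun k => Vr (pi k)).
  by apply/nonincreasing_seqP => n; exact: pmd_Vrho_nonincreasing.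
have last_le_sum : k.+1%:R * (Vr (pi k) - Vr pistar)
    <= \sum_(0 <= n < k.+1) (Vr (pi n) - Vr pistar).
  apply: (@le_trans _ _ (\sum_(0 <= n < k.+1) (Vr (pi k) - Vr pistar))).
    by rewrite sumr_const_nat subn0 mulr_natl.
  by apply: ler_sum_nat => n /andP[_ n_le]; rewrite lerD2r Vr_mono.
have := ler_wpM2l (ltW one_sub_gamma_gt0) last_le_sum.
have := pmd_average_bound k.+1.
have -> : D 0 / (eta * (1 - gamma)) + 1 / (1 - gamma) ^+ 2
    = (D 0 / eta + 1 / (1 - gamma)) / (1 - gamma).
  by field; rewrite !lt0r_neq0.
rewrite ler_pdivlMl ?ltr0Sn // ler_pdivlMr //; lra.
Qed.

End PolicyMirrorDescent.

Theorem theorem8 (R : realType) (S : finType) (m : nat)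
  (P : S -> 'I_m -> S -> R) (c : S -> 'I_m -> R) (gamma : R)
  (h : 'rV[R]_m -> \bar R) (eta : R) (pi : nat -> S -> 'rV[R]_m)
  (pistar : S -> 'rV[R]_m) :
  is_MDP P c gamma ->
  legendre h ->
  (forall p : 'rV[R]_m, in_simplex p -> edom h p) ->
  (forall p : 'rV[R]_m, in_rint_simplex p -> rint_dom h p) ->
  is_optimal_policy P c gamma pistar ->
  0 < eta ->
  is_rint_policy (pi 0%N) ->
  is_PMD_sequence P c gamma h (fun _ => eta) pi ->
  forall rho : S -> R, is_state_distr rho ->
  forall k : nat,
    Vrho P c gamma rho (pi k) - Vstar P c gamma rho
    <= (k.+1%:R)^-1 *
       (Dstar P gamma h rho pistar (pi 0%N) / (eta * (1 - gamma))
        + 1 / (1 - gamma) ^+ 2).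
Proof.
move=> mdp h_legendre simplex_dom rint_simplex_dom pistar_optimal eta_gt0 pi0_rint pi_pmd
  rho rho_distr k.
apply: le_trans (pmd_rate mdp h_legendre simplex_dom rint_simplex_dom pistar_optimal eta_gt0
  pi0_rint pi_pmd rho_distr k).
by rewrite lerD2l lerN2; exact: (Vrho_optimal_le_Vstar rho_distr.1 pistar_optimal).
Qed.
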